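(* Let $f \in \mathbb{C}[x_1,\dots,x_n]_d$. If $f$ has a local border decomposition with $r$ summands and base $[\ell]$, then $f$ has a standard local border decomposition with the same base $[\ell]$ and the same number $r$ of summands.
   Context: Let $\mathbb{C}(\epsilon)[\boldsymbol{x}]_1$ be the set of linear forms in $x_1,\dots,x_n$ with coefficients rational functions of $\epsilon$. A nonzero $\ell(\epsilon)\in\mathbb{C}(\epsilon)[\boldsymbol{x}]_1$ can be expanded as a Laurent series $\ell(\epsilon)=\sum_{i\ge q}\epsilon^i \ell_i$ with $\ell_i\in\mathbb{C}[\boldsymbol{x}]_1$, $\ell_q\neq 0$; its projective limit is $\lim_{\epsilon\to0}[\ell(\epsilon)] := [\ell_q]$, a point of the projective space of lines in $\mathbb{C}[\boldsymbol{x}]_1$. A border Waring rank decomposition of $f$ is an expression $f=\lim_{\epsilon\to0}\sum_{k=1}^r \ell_k^d$ with $\ell_k\in\mathbb{C}(\epsilon)[\boldsymbol{x}]_1$ (limit taken coefficientwise). It is a local border decomposition with base $[\ell]$ (for a nonzero $\ell\in\mathbb{C}[\boldsymbol{x}]_1$) if $\lim_{\epsilon\to0}[\ell_k(\epsilon)]=[\ell]$ for all $k=1,\dots,r$. A local border decomposition with base $[\ell]$ is standard if $\ell_1=\epsilon^q\gamma\ell$ for some $q\in\mathbb{Z}$ and $\gamma\in\mathbb{C}$. *)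

From HB Require Import structures.
From mathcomp Require Import all_boot all_order all_algebra fraction.
From mathcomp Require Import complex.
From mathcomp Require Import Rstruct.
From mathcomp Require Import mpoly.

Set Implicit Arguments.
Unset Strict Implicit.
Unset Printing Implicit Defensive.
Import GRing.Theory.
Local Open Scope ring_scope.

Definition CC : numClosedFieldType := complex Rdefinitions.R.

Definition Keps : fieldType := {fraction {poly CC}}.

Definition cst (c : CC) : Keps := tofrac (c%:P).

Definition eps : Keps := tofrac ('X : {poly CC}).

(* lim_{eps -> 0} x = c, for a rational function x: x is regular at 0
   (x = a/b with b(0) <> 0) and its value at 0 is c. *)
Definition lim0 (x : Keps) (c : CC) : Prop :=
  exists a b : {poly CC}, b.[0] != 0 /\ x = tofrac a / tofrac b /\ c = a.[0] / b.[0].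

Definition linform (n : nat) (l : 'I_n -> Keps) : {mpoly Keps[n]} :=
  \sum_(i < n) l i *: 'X_i.

(* lim_{eps->0} [l(eps)] = [b]  (projective limit): writing the Laurent
   expansion l = sum_{i>=q} eps^i l_i with l_q <> 0, we have [l_q] = [b],
   i.e. l_q = c b with c <> 0.  Here l_q is the value at 0 of eps^(-q) l,
   and since c b <> 0 (b <> 0 is assumed where used), q is the order of l. *)
Definition proj_lim (n : nat) (l : 'I_n -> Keps) (b : 'I_n -> CC) : Prop :=
  exists (q : int) (c : CC), c != 0 /\
    forall i : 'I_n, lim0 (eps ^ (- q) * l i) (c * b i).

Definition border_decomp (n d r : nat) (f : {mpoly CC[n]})
    (L : 'I_r -> 'I_n -> Keps) : Prop :=
  forall m : 'X_{1..n},
    lim0 ((\sum_(k < r) (linform (L k)) ^+ d)@_m) (f@_m).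

Definition local_border_decomp (n d r : nat) (f : {mpoly CC[n]})
    (b : 'I_n -> CC) (L : 'I_r -> 'I_n -> Keps) : Prop :=
  border_decomp d f L /\ forall k : 'I_r, proj_lim (L k) b.

Definition standard_local_border_decomp (n d r : nat) (f : {mpoly CC[n]})
    (b : 'I_n -> CC) (L : 'I_r -> 'I_n -> Keps) : Prop :=
  local_border_decomp d f b L /\
  forall h : (0 < r)%N, exists (q : int) (gamma : CC),
    forall i : 'I_n, L (Ordinal h) i = eps ^ q * cst gamma * cst (b i).

From HB Require Import structures.
From mathcomp Require Import all_boot all_order all_algebra fraction.
From mathcomp Require Import complex.
From mathcomp Require Import Rstruct.
From mathcomp Require Import mpoly.
From Stdlib Require Import ClassicalEpsilon.
Set Implicit Arguments.
Unset Strict Implicit.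
Unset Printing Implicit Defensive.
Import GRing.Theory.
Local Open Scope ring_scope.

(** Pick a coordinate j with b_j <> 0 and write eps^(-q) l_1 = v, so that
   v -> c b.  The perturbation t_i = (c b_i - v_i) / v_j tends to 0, and the
   substitution x_j |-> x_j + sum_i t_i x_i turns every l_k into
   l_k + l_{k,j} t, which has the same projective limit and turns l_1 into
   eps^q c b.  Since this substitution tends to the identity, it preserves
   the coefficientwise limit of sum_k l_k^d: all of this is ring arithmetic
   in the subring of C(eps) of rational functions regular at 0, on which
   evaluation at 0 is a ring morphism. *)

HB.instance Definition _ :=
  GRing.RMorphism.copy cst (@tofrac {poly CC} \o polyC).

Lemma tofrac_neq0 (p : {poly CC}) : p.[0] != 0 -> tofrac p != 0 :> Keps.
Proof. by apply: contra; rewrite tofrac_eq0 => /eqP ->; rewrite horner0. Qed.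

Lemma eps_neq0 : eps != 0.
Proof. by rewrite tofrac_eq0 polyX_eq0. Qed.

Lemma lim0_uniq x c e : lim0 x c -> lim0 x e -> c = e.
Proof.
move=> [a [b [b0 [-> ->]]]] [a' [b' [b'0 [/eqP E ->]]]].
move: E; rewrite eqr_div ?tofrac_neq0 // -!tofracM tofrac_eq => /eqP E.
by apply/eqP; rewrite eqr_div // -!hornerM E.
Qed.

Lemma lim0D x y c e : lim0 x c -> lim0 y e -> lim0 (x + y) (c + e).
Proof.
move=> [a [b [b0 [-> ->]]]] [a' [b' [b'0 [-> ->]]]].
exists (a * b' + a' * b), (b * b'); split; first by rewrite hornerM mulf_neq0.
by rewrite !addf_div ?tofrac_neq0 // tofracD !tofracM hornerD !hornerM.
Qed.

Lemma lim0N x c : lim0 x c -> lim0 (- x) (- c).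
Proof.
move=> [a [b [b0 [-> ->]]]]; exists (- a), b.
by rewrite tofracN hornerN !mulNr.
Qed.

Lemma lim0M x y c e : lim0 x c -> lim0 y e -> lim0 (x * y) (c * e).
Proof.
move=> [a [b [b0 [-> ->]]]] [a' [b' [b'0 [-> ->]]]].
exists (a * a'), (b * b'); split; first by rewrite hornerM mulf_neq0.
by rewrite !mulf_div !tofracM !hornerM.
Qed.

Lemma lim0V x c : lim0 x c -> c != 0 -> lim0 x^-1 c^-1.
Proof.
move=> [a [b [b0 [-> ->]]]] c0; exists b, a.
have a0 : a.[0] != 0 by apply: contra c0 => /eqP ->; rewrite mul0r.
by rewrite !invf_div.
Qed.

Lemma lim0_cst c : lim0 (cst c) c.
Proof.
exists c%:P, 1; split; first by rewrite hornerC oner_neq0.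
by rewrite rmorph1 !hornerC !divr1.
Qed.

Lemma lim01 : lim0 1 1.
Proof. by rewrite -[X in lim0 X](rmorph1 cst); exact: lim0_cst. Qed.

Lemma lim0_neq0 x c : lim0 x c -> c != 0 -> x != 0.
Proof.
move=> xc; apply: contra => /eqP x0; move: xc; rewrite x0 -(rmorph0 cst).
by move/lim0_uniq/(_ (lim0_cst 0)) ->.
Qed.

Definition regular : {pred Keps} :=
  fun x =>
    if excluded_middle_informative (exists c, lim0 x c) then true else false.

Lemma regularP x : reflect (exists c, lim0 x c) (x \in regular).
Proof.
by rewrite unfold_in /regular; case: excluded_middle_informative; constructor.
Qed.

Definition value0 (x : Keps) : CC := epsilon (inhabits 0) (lim0 x).

Lemma value0E x c : lim0 x c -> value0 x = c.
Proof.
by move=> xc; apply: (lim0_uniq _ xc); apply: epsilon_spec; exists c.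
Qed.

Lemma lim0_value0 x : x \in regular -> lim0 x (value0 x).
Proof. by move/regularP=> [c xc]; rewrite (value0E xc). Qed.

Fact regular_subring_closed : subring_closed regular.
Proof.
split=> [|x y xr yr|x y xr yr]; apply/regularP; eexists.
- exact: lim01.
- exact: lim0D (lim0_value0 xr) (lim0N (lim0_value0 yr)).
- exact: lim0M (lim0_value0 xr) (lim0_value0 yr).
Qed.

HB.instance Definition _ :=
  GRing.isSubringClosed.Build Keps regular regular_subring_closed.

Record Kreg := MkKreg { kreg_val : Keps; kreg_valP : kreg_val \in regular }.
HB.instance Definition _ := [isSub for kreg_val].
HB.instance Definition _ := [Choice of Kreg by <:].
HB.instance Definition _ := [SubChoice_isSubComNzRing of Kreg by <:].

Definition at0 (x : Kreg) : CC := value0 (val x).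

Lemma lim0_at0 x : lim0 (val x) (at0 x).
Proof. exact: lim0_value0 (valP x). Qed.

Lemma at0E x c : lim0 (val x) c -> at0 x = c.
Proof. exact: value0E. Qed.

Fact at0_is_zmod_morphism : zmod_morphism at0.
Proof.
by move=> x y; apply: at0E; exact: lim0D (lim0_at0 x) (lim0N (lim0_at0 y)).
Qed.

Fact at0_is_monoid_morphism : monoid_morphism at0.
Proof.
split=> [|x y]; apply: at0E; last exact: lim0M (lim0_at0 x) (lim0_at0 y).
exact: lim01.
Qed.

HB.instance Definition _ :=
  GRing.isZmodMorphism.Build Kreg CC at0 at0_is_zmod_morphism.
HB.instance Definition _ :=
  GRing.isMonoidMorphism.Build Kreg CC at0 at0_is_monoid_morphism.

Lemma map_mpoly_comp_mpoly (R S : nzRingType) (g : {rmorphism R -> S})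
    n k (lq : n.-tuple {mpoly R[k]}) (p : {mpoly R[n]}) :
  map_mpoly g (p \mPo lq) = map_mpoly g p \mPo map_tuple (map_mpoly g) lq.
Proof.
rewrite [p in LHS]mpolyE [p in RHS]mpolyE (raddf_sum (comp_mpoly lq)).
rewrite !(raddf_sum (map_mpoly g)) (raddf_sum (comp_mpoly _)) /=.
apply: eq_bigr => m _.
rewrite comp_mpolyZ !map_mpolyZ comp_mpolyZ map_mpolyX !comp_mpolyX rmorph_prod.
by congr (_ *: _); apply: eq_bigr => i _; rewrite rmorphXn tnth_map.
Qed.

Section CoefficientwiseLimit.
Variable n : nat.
Implicit Types (F : {mpoly Keps[n]}) (f : {mpoly CC[n]}).

Definition mlim0 F f := forall m, lim0 F@_m f@_m.

Lemma mlim0D F G f g : mlim0 F f -> mlim0 G g -> mlim0 (F + G) (f + g).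
Proof. by move=> Ff Gg m; rewrite !mcoeffD; exact: lim0D. Qed.

Lemma mlim00 : mlim0 0 0.
Proof. by move=> m; rewrite !mcoeff0 -(rmorph0 cst); exact: lim0_cst. Qed.

Lemma mlim0_sum (I : Type) (s : seq I) (G : I -> {mpoly Keps[n]})
    (g : I -> {mpoly CC[n]}) :
  (forall i, mlim0 (G i) (g i)) ->
  mlim0 (\sum_(i <- s) G i) (\sum_(i <- s) g i).
Proof.
move=> Gg; elim: s => [|i s IHs]; first by rewrite !big_nil; exact: mlim00.
by rewrite !big_cons; exact: mlim0D.
Qed.

Lemma mlim0ZX a c m : lim0 a c -> mlim0 (a *: 'X_[m]) (c *: 'X_[m]).
Proof.
move=> ac m'; rewrite !mcoeffZ !mcoeffX -(rmorph_nat cst).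
exact: lim0M ac (lim0_cst _).
Qed.

Lemma mlim0_linform (l : 'I_n -> Keps) (c : 'I_n -> CC) :
  (forall i, lim0 (l i) (c i)) -> mlim0 (linform l) (\sum_(i < n) c i *: 'X_i).
Proof. by move=> lc; apply: mlim0_sum => i; exact: mlim0ZX. Qed.

Definition mlift F : {mpoly Kreg[n]} :=
  \sum_(m <- msupp F) insubd 0 F@_m *: 'X_[m].

Lemma mliftK F f : mlim0 F f -> map_mpoly val (mlift F) = F.
Proof.
move=> Ff; rewrite [RHS]mpolyE raddf_sum /=; apply: eq_bigr => m _.
rewrite -[map_mpoly kreg_val]/(map_mpoly val) map_mpolyZ map_mpolyX.
congr (_ *: _).
apply: insubdK; apply/regularP; exists f@_m; exact: Ff.
Qed.

Lemma mlift_at0 F f : mlim0 F f -> map_mpoly at0 (mlift F) = f.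
Proof.
move=> Ff; apply/mpolyP => m; rewrite mcoeff_map_mpoly; apply: at0E.
by rewrite -mcoeff_map_mpoly (mliftK Ff).
Qed.

Lemma mlim0_map (P : {mpoly Kreg[n]}) :
  mlim0 (map_mpoly val P) (map_mpoly at0 P).
Proof. by move=> m; rewrite !mcoeff_map_mpoly; exact: lim0_at0. Qed.

End CoefficientwiseLimit.

Lemma mlim0_comp n k (F : {mpoly Keps[n]}) (f : {mpoly CC[n]})
    (lq : n.-tuple {mpoly Keps[k]}) (g : n.-tuple {mpoly CC[k]}) :
  mlim0 F f -> (forall i, mlim0 (tnth lq i) (tnth g i)) ->
  mlim0 (F \mPo lq) (f \mPo g).
Proof.
move=> Ff lg; pose Q := map_tuple (@mlift k) lq.
have -> : lq = map_tuple (map_mpoly val) Q.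
  by apply: eq_from_tnth => i; rewrite !tnth_map (mliftK (lg i)).
have -> : g = map_tuple (map_mpoly at0) Q.
  by apply: eq_from_tnth => i; rewrite !tnth_map (mlift_at0 (lg i)).
rewrite -(mliftK Ff) -(mlift_at0 Ff) -!map_mpoly_comp_mpoly.
exact: mlim0_map.
Qed.

Lemma proj_lim_shift n (l : 'I_n -> Keps) (b : 'I_n -> CC) (j : 'I_n)
    (t : 'I_n -> Keps) :
  proj_lim l b -> (forall i, lim0 (t i) 0) ->
  proj_lim (fun i => l i + l j * t i) b.
Proof.
move=> [q [c [c0 lb]]] t0; exists q, c; split=> // i.
rewrite mulrDr mulrA -[c * b i]addr0 -(mulr0 (c * b j)).
exact: lim0D (lb i) (lim0M (lb j) (t0 i)).
Qed.

Lemma proj_lim_standardize n (l : 'I_n -> Keps) (b : 'I_n -> CC) (j : 'I_n) :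
  proj_lim l b -> b j != 0 ->
  exists q c (t : 'I_n -> Keps), (forall i, lim0 (t i) 0) /\
    forall i, l i + l j * t i = eps ^ q * cst c * cst (b i).
Proof.
move=> [q [c [c0 lb]]] bj0; pose v i := eps ^ (- q) * l i.
have cbj0 : c * b j != 0 by rewrite mulf_neq0.
have vj0 : v j != 0 := lim0_neq0 (lb j) cbj0.
exists q, c, (fun i => (cst (c * b i) - v i) / v j); split=> i.
  rewrite -(mul0r (c * b j)^-1) -(subrr (c * b i)).
  exact: lim0M (lim0D (lim0_cst _) (lim0N (lb i))) (lim0V (lb j) cbj0).
have lE k : l k = eps ^ q * v k.
  by rewrite mulrA -expfzDr ?eps_neq0 // subrr expr0z mul1r.
rewrite (lE i) (lE j) -(mulrA _ (v j)) (mulrC (v j)) divfK //.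
by rewrite -mulrDr addrC subrK rmorphM mulrA.
Qed.

Definition shift_subst n (j : 'I_n) (t : 'I_n -> Keps) :
    n.-tuple {mpoly Keps[n]} :=
  [tuple 'X_i + (if i == j then linform t else 0) | i < n].

Lemma linform_shift n (l : 'I_n -> Keps) (j : 'I_n) (t : 'I_n -> Keps) :
  linform (fun i => l i + l j * t i) = linform l \mPo shift_subst j t.
Proof.
rewrite /linform (raddf_sum (comp_mpoly _)) /=.
under [RHS]eq_bigr => i _ do
  rewrite comp_mpolyZ comp_mpolyXU -tnth_nth tnth_mktuple scalerDr.
under eq_bigr => i _ do rewrite scalerDl.
rewrite !big_split /=; congr (_ + _).
rewrite [RHS](bigD1 j) //= eqxx [X in _ + X]big1 ?addr0; last first.
  by move=> i /negbTE ->; rewrite scaler0.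
by rewrite scaler_sumr; apply: eq_bigr => i _; rewrite scalerA.
Qed.

Lemma mlim0_shift_subst n (j : 'I_n) (t : 'I_n -> Keps) :
  (forall i, lim0 (t i) 0) -> forall i, mlim0 (tnth (shift_subst j t) i) 'X_i.
Proof.
move=> t0 i; rewrite tnth_mktuple -[X in mlim0 _ X]addr0; apply: mlim0D.
  by rewrite -[X in mlim0 X]scale1r -[X in mlim0 _ X]scale1r; exact: mlim0ZX lim01.
case: eqP => _; last exact: mlim00.
have := mlim0_linform t0; rewrite big1 // => i' _; exact: scale0r.
Qed.

Lemma border_decomp_subst n d r (f : {mpoly CC[n]})
    (L L' : 'I_r -> 'I_n -> Keps) (lq : n.-tuple {mpoly Keps[n]}) :
  border_decomp d f L -> (forall i, mlim0 (tnth lq i) 'X_i) ->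
  (forall k, linform (L' k) = linform (L k) \mPo lq) -> border_decomp d f L'.
Proof.
move=> Lf lqX L'E; rewrite /border_decomp -/(mlim0 _ f).
under eq_bigr => k _ do rewrite L'E -(rmorphXn (comp_mpoly lq)).
rewrite -rmorph_sum -[f]comp_mpoly_id.
by apply: mlim0_comp Lf _ => i; rewrite tnth_mktuple.
Qed.

Theorem lemma6 (n d r : nat) (f : {mpoly CC[n]}) (b : 'I_n -> CC)
    (L : 'I_r -> 'I_n -> Keps) :
  f \is d.-homog ->
  (exists i : 'I_n, b i != 0) ->
  local_border_decomp d f b L ->
  exists L' : 'I_r -> 'I_n -> Keps, standard_local_border_decomp d f b L'.
Proof.
move=> _ [j bj0] [Lf Lb].
case: r L Lf Lb => [|r] L Lf Lb; first by exists L; split.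
have [q [c [t [t0 L0E]]]] := proj_lim_standardize (Lb ord0) bj0.
exists (fun k i => L k i + L k j * t i); split; first split.
- apply: border_decomp_subst Lf (mlim0_shift_subst j t0) _ => k.
  exact: linform_shift.
- by move=> k; apply: proj_lim_shift (Lb k) t0.
- move=> r_gt0; exists q, c => i.
  by rewrite (_ : Ordinal r_gt0 = ord0) ?L0E //; apply: val_inj.
Qed.
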